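(* Let $n\ge -1$ be an odd integer, and let $q_1,q_2\in\Gamma_n$ and paths $a,b$ of positive length satisfy $q_1a=bq_2$ (so $q_1$ and $q_2$ occur at different positions in the path $w:=q_1a=bq_2$, $q_1$ as a suffix and $q_2$ as a prefix). If $a\notin I$ and $b\notin I$, then there exist $(n+1)$-ambiguities $p_1,p_2\le w$ (occurring in $w$) such that $\sigma_n(p_1)=q_1$ and $\pi_n(p_2)=q_2$ (as occurrences in $w$).
   Context: Let $\Bbbk$ be a field, $Q=(Q_0,Q_1,s,t)$ a finite quiver, and $A=\Bbbk Q/I$ a finite-dimensional monomial algebra, i.e. $I$ is an ideal generated by paths of length at least $2$. Paths are written from right to left: a path is $p=\alpha_n\cdots\alpha_1$ with arrows $\alpha_i$ and $t(\alpha_i)=s(\alpha_{i+1})$; vertices are the paths of length $0$ (trivial paths, also denoted $1$); $qp$ denotes concatenation when $t(p)=s(q)$. Let $\mathcal B$ be the set of paths not lying in $I$. If $p=bqa$ for paths $a,b,q$, then $q$ is a divisor of $p$; we write $q\le p$ to mean that $q$ is a divisor of $p$ at a fixed position (an occurrence), and then $\mathrm{pre}_p(q):=a$, $\mathrm{suf}_p(q):=b$. If $b$ is trivial, $q$ is a suffix; if $a$ is trivial, $q$ is a prefix; proper means $q\neq p$, written $q\lneq p$. For $n\ge -1$, a left $n$-ambiguity is a path $p$ with a decomposition $p=u_{-1}u_0u_1\cdots u_n$ such that $u_{-1}\in Q_0$, $u_0\in Q_1$, $u_i\in\mathcal B$ for all $i$, and for every $0\le i\le n-1$, $u_iu_{i+1}\in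 I$ while no proper suffix of $u_iu_{i+1}$ lies in $I$ (one writes $p=u_0\cdots u_n$). A right $n$-ambiguity is a path with a decomposition $p=v_n\cdots v_0v_{-1}$ with $v_{-1}\in Q_0$, $v_0\in Q_1$, $v_i\in\mathcal B$, and for $0\le i\le n-1$, $v_{i+1}v_i\in I$ while no proper prefix of $v_{i+1}v_i$ lies in $I$. A path is a left $n$-ambiguity iff it is a right $n$-ambiguity; such paths are called $n$-ambiguities, and $\Gamma_n$ denotes their set. Both decompositions of an $n$-ambiguity are unique. For $p\in\Gamma_n$ with left decomposition $u_0\cdots u_n$ and right decomposition $v_n\cdots v_0$, and $-1\le m\le n$, set $\sigma_m(p):=u_0\cdots u_m$ (a suffix of $p$ which is an $m$-ambiguity) and $\pi_m(p):=v_m\cdots v_0$ (a prefix of $p$ which is an $m$-ambiguity). *)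

(* Quivers, paths and monomial relations, written as in the paper:
   paths are composed right to left; a path's arrow word [parrs] lists the arrows
   in the written order, i.e. the LEFTMOST (last traversed) arrow first.
   So for the paper's concatenation  q p  (t p = s q) we get  parrs q ++ parrs p. *)
From mathcomp Require Import all_boot all_order all_algebra.
Set Implicit Arguments. Unset Strict Implicit. Unset Printing Implicit Defensive.
Import Order.TTheory GRing.Theory Num.Theory.

Section Quiver.
Variables (V E : finType) (s t : E -> V).

Record qpath := QPath { psrc : V; ptgt : V; parrs : seq E }.

Fixpoint chain (ws : seq E) : Prop :=
  match ws with
  | x :: ((y :: _) as ws') => s x = t y /\ chain ws'
  | _ => True
  end.

Definition valid (p : qpath) : Prop :=
  match parrs p with
  | [::] => psrc p = ptgt p
  | x :: ws => ptgt p = t x /\ psrc p = s (last x ws) /\ chain (x :: ws)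
  end.

Definition pcat (q p : qpath) : qpath := QPath (psrc p) (ptgt q) (parrs q ++ parrs p).

Definition composable (q p : qpath) : Prop := valid q /\ valid p /\ psrc q = ptgt p.

Variable rels : seq E -> Prop.

(* a word lies in the monomial ideal I iff some generator divides it *)
Definition inIw (ws : seq E) : Prop :=
  exists l r m, rels r /\ ws = l ++ r ++ m.
Definition inI (p : qpath) : Prop := inIw (parrs p).

(* left decomposition  p = u_{-1} u_0 ... u_{m-1}  (m = n+1);  us = [u_0; ...; u_{m-1}],
   u_{-1} = the vertex ptgt p.  A proper suffix of u_i u_{i+1} is a left part x of
   u_i u_{i+1} = x y with y nontrivial. *)
Definition ldec (m : nat) (p : qpath) (us : seq (seq E)) : Prop :=
  [/\ valid p /\ size us = m, parrs p = flatten us,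
      ((0 < m)%N -> size (nth [::] us 0) = 1),
      (forall i, (i < m)%N -> ~ inIw (nth [::] us i)) &
      forall i, (i.+1 < m)%N ->
        inIw (nth [::] us i ++ nth [::] us i.+1) /\
        forall x y, nth [::] us i ++ nth [::] us i.+1 = x ++ y -> y <> [::] -> ~ inIw x].

(* right decomposition  p = v_{m-1} ... v_0 v_{-1};  vs = [v_0; ...; v_{m-1}],
   v_{-1} = the vertex psrc p.  A proper prefix of v_{i+1} v_i is a right part y of
   v_{i+1} v_i = x y with x nontrivial. *)
Definition rdec (m : nat) (p : qpath) (vs : seq (seq E)) : Prop :=
  [/\ valid p /\ size vs = m, parrs p = flatten (rev vs),
      ((0 < m)%N -> size (nth [::] vs 0) = 1),
      (forall i, (i < m)%N -> ~ inIw (nth [::] vs i)) &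
      forall i, (i.+1 < m)%N ->
        inIw (nth [::] vs i.+1 ++ nth [::] vs i) /\
        forall x y, nth [::] vs i.+1 ++ nth [::] vs i = x ++ y -> x <> [::] -> ~ inIw y].

(* Gamma_n for an integer n >= -1 : the n-ambiguities (defined as left n-ambiguities;
   the paper proves left <-> right). *)
Definition Gamma (n : int) (p : qpath) : Prop :=
  (-1 <= n)%R /\ exists us, ldec `|(n + 1)%R|%N p us.

(* sigma_k(p) = q for p in Gamma_n, -1 <= k <= n : q = u_{-1} u_0 ... u_k
   read off the (unique) left decomposition of p. *)
Definition sigma_is (n k : int) (p q : qpath) : Prop :=
  (-1 <= k)%R /\ (k <= n)%R /\
  exists us, [/\ ldec `|(n + 1)%R|%N p us, valid q, ptgt q = ptgt p &
                 parrs q = flatten (take `|(k + 1)%R|%N us)].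

(* pi_k(p) = q for p in Gamma_n : q = v_k ... v_0 v_{-1}, from the right decomposition. *)
Definition pi_is (n k : int) (p q : qpath) : Prop :=
  (-1 <= k)%R /\ (k <= n)%R /\
  exists vs, [/\ rdec `|(n + 1)%R|%N p vs, valid q, psrc q = psrc p &
                 parrs q = flatten (rev (take `|(k + 1)%R|%N vs))].

End Quiver.

From mathcomp Require Import all_boot all_order all_algebra.
From mathcomp Require Import zify.
From Stdlib Require Import ClassicalEpsilon.
Import Order.TTheory GRing.Theory Num.Theory.
Set Implicit Arguments. Unset Strict Implicit. Unset Printing Implicit Defensive.

(* Read a path as its arrow word, leftmost arrow first: the paper's suffixes become
   prefixes, and a left decomposition is found greedily from the start of the word,
   each piece ending at the first place where it forms, with the piece before it, a
   word of I.  Put w := q1 a = b q2 and compare the cuts of the left decompositions of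
   q1 (starting at position 0 of w) and of q2 (starting at position |b| > 0): by this
   minimality, every odd cut of q1 stays weakly left of the preceding even cut of q2.
   As n + 1 is even, the second-to-last cut of q1 thus lies left of the
   second-to-last cut of q2, and the last two pieces of q2 already form a word of I
   ending at the end of w.  So the greedy next piece after q1 ends inside a, and as
   a is not in I, it extends q1 to an (n+1)-ambiguity p1.  The claim on p2 is the
   mirror image under word reversal, which exchanges left and right decompositions;
   it uses that every left decomposition has a right one, obtained greedily from the
   end of the word. *)

Definition classicb (P : Prop) : bool := if excluded_middle_informative P then true else false.

Lemma classicbP P : reflect P (classicb P).
Proof. by rewrite /classicb; case: excluded_middle_informative => h; constructor. Qed.

Fixpoint last_below (f : nat -> bool) k :=
  match k with 0 => 0 | k'.+1 => if f k then k else last_below f k' end.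

Lemma last_belowP (f : nat -> bool) k y : y <= k -> f y ->
  [/\ f (last_below f k), y <= last_below f k, last_below f k <= k &
      forall y', last_below f k < y' <= k -> ~~ f y'].
Proof.
elim: k => [|k IH] hy fy.
  move: hy; rewrite leqn0 => /eqP Hy; subst y; split => // y' /andP [h1 h2].
  by move: h1 h2; rewrite /=; lia.
rewrite /=; case fk: (f k.+1).
  by split => // y' /andP [h1 h2]; move: h1 h2; lia.
have hy' : y <= k.
  rewrite leq_eqVlt in hy; case/orP: hy => [/eqP Hy|//].
  by subst; rewrite fk in fy.
have [h1 h2 h3 h4] := IH hy' fy; split => //; first exact: leqW.
move=> y' /andP [a b]; case: (ltnP k y') => c.
  by rewrite (_ : y' = k.+1) ?fk //; lia.
by apply: h4; rewrite a c.
Qed.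

Section Words.
Variables (E : finType) (rels : seq E -> Prop).

Lemma inIw_infix l w r : inIw rels w -> inIw rels (l ++ w ++ r).
Proof.
case=> l' [r' [m' [Hr ->]]]; exists (l ++ l'), r', (m' ++ r); split=> //.
by rewrite -!catA.
Qed.

Definition slice (w : seq E) i j := take (j - i) (drop i w).

Lemma size_slice w i j : j <= size w -> size (slice w i j) = j - i.
Proof. by move=> H; rewrite /slice size_take size_drop; case: ltnP => //; lia. Qed.

Lemma slice_full w : slice w 0 (size w) = w.
Proof. by rewrite /slice drop0 subn0 take_size. Qed.

Lemma slice_cat w i j k : i <= j <= k -> slice w i k = slice w i j ++ slice w j k.
Proof.
move=> /andP [Hij Hjk]; rewrite /slice.
have -> : k - i = (j - i) + (k - j) by lia.
by rewrite takeD drop_drop subnK.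
Qed.

Lemma inIw_slice_widen w i' i j j' :
  i' <= i -> i <= j -> j <= j' -> inIw rels (slice w i j) -> inIw rels (slice w i' j').
Proof.
move=> Hi Hij Hj H.
rewrite (@slice_cat w i' i j'); last by apply/andP; split; lia.
by rewrite (@slice_cat w i j j') ?Hj ?Hij //; apply: inIw_infix.
Qed.

Lemma slice_prefix w i k x y : slice w i k = x ++ y -> x = slice w i (i + size x).
Proof.
move=> H.
have Hx : size x <= k - i.
  move: (f_equal size H); rewrite size_cat /slice size_take_min => h.
  have := geq_minl (k - i) (size (drop i w)); lia.
have := f_equal (take (size x)) H.
by rewrite take_size_cat // /slice take_takel // addKn => ->.
Qed.

Lemma slice_suffix w i k x y : i <= k -> slice w i k = x ++ y -> y = slice w (i + size x) k.
Proof.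
move=> Hik H.
have Hx : size x <= k - i.
  move: (f_equal size H); rewrite size_cat /slice size_take_min => h.
  have := geq_minl (k - i) (size (drop i w)); lia.
have := H; rewrite (@slice_cat w i (i + size x) k); last by apply/andP; split; lia.
rewrite -(slice_prefix H) => H2.
by have := f_equal (drop (size x)) H2; rewrite !drop_size_cat.
Qed.

End Words.

Section Decompositions.
Variables (E : finType) (rels : seq E -> Prop).

Definition ldecw m (ws : seq E) us := [/\ size us = m, ws = flatten us,
  (0 < m -> size (nth [::] us 0) = 1),
  (forall i, i < m -> ~ inIw rels (nth [::] us i)) &
  forall i, i.+1 < m -> inIw rels (nth [::] us i ++ nth [::] us i.+1) /\
    forall x y, nth [::] us i ++ nth [::] us i.+1 = x ++ y -> y <> [::] -> ~ inIw rels x].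

Definition rdecw m (ws : seq E) vs := [/\ size vs = m, ws = flatten (rev vs),
  (0 < m -> size (nth [::] vs 0) = 1),
  (forall i, i < m -> ~ inIw rels (nth [::] vs i)) &
  forall i, i.+1 < m -> inIw rels (nth [::] vs i.+1 ++ nth [::] vs i) /\
    forall x y, nth [::] vs i.+1 ++ nth [::] vs i = x ++ y -> x <> [::] -> ~ inIw rels y].

Definition cutpos (pre : seq E) (us : seq (seq E)) j := size pre + size (flatten (take j us)).

Lemma cutpos0 pre us : cutpos pre us 0 = size pre.
Proof. by rewrite /cutpos take0 addn0. Qed.

Lemma cutposS pre us j : cutpos pre us j.+1 = cutpos pre us j + size (nth [::] us j).
Proof.
rewrite /cutpos -addnA; congr (_ + _); case: (ltnP j (size us)) => H.
  by rewrite (take_nth [::] H) flatten_rcons size_cat.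
rewrite (take_oversize H) take_oversize; last exact: leqW.
by rewrite nth_default // addn0.
Qed.

Lemma cutpos_mono pre us i j : i <= j -> cutpos pre us i <= cutpos pre us j.
Proof.
move=> /subnK <-; elim: (j - i) => [|d IH]; first by rewrite add0n.
by rewrite addSn cutposS; apply: (leq_trans IH); apply: leq_addr.
Qed.

Lemma cutpos_le pre us j : cutpos pre us j <= size pre + size (flatten us).
Proof.
case: (leqP j (size us)) => h; last by rewrite /cutpos take_oversize // ltnW.
by rewrite -[us in X in _ <= X](take_size us); apply: cutpos_mono.
Qed.

Section LeftCuts.
Variables (m : nat) (ws : seq E) (us : seq (seq E)) (pre post : seq E).
Hypothesis Hus : ldecw m ws us.

Local Notation w := (pre ++ ws ++ post).
Local Notation cut := (cutpos pre us).

Lemma cutpos_size : cut m = size pre + size ws.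
Proof. by case: Hus => <- -> _ _ _; rewrite /cutpos take_size. Qed.

Lemma nth_ldecw i : i < m -> nth [::] us i = slice w (cut i) (cut i.+1).
Proof.
case: Hus => Hs Hw _ _ _ Hi; rewrite -Hs in Hi.
rewrite /slice cutposS addKn /cutpos addnC -drop_drop drop_size_cat // Hw.
rewrite -[in drop _ (flatten us ++ _)](cat_take_drop i us) flatten_cat -catA.
rewrite drop_size_cat ?cat_take_drop //.
by rewrite (drop_nth [::] Hi) /= -catA take_size_cat.
Qed.

Lemma cutpos1 : 0 < m -> cut 1 = (size pre).+1.
Proof. by case: Hus => _ _ H1 _ _ hm; rewrite cutposS cutpos0 H1 // addn1. Qed.

Lemma cutpos_lt i : i < m -> cut i < cut i.+1.
Proof.
case: Hus => _ _ H1 Hn Hp hi; rewrite cutposS.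
case: i hi => [|i] hi; first by rewrite H1 // addn1.
have [Hp1 _] := Hp i hi.
case E0: (nth [::] us i.+1) => [|x r]; last by rewrite /= addnS ltnS leq_addr.
by exfalso; apply: (Hn i (ltnW hi)); rewrite E0 cats0 in Hp1.
Qed.

Lemma ldecw_piece_notin i : i < m -> ~ inIw rels (slice w (cut i) (cut i.+1)).
Proof. by move=> hi; rewrite -nth_ldecw //; case: Hus => _ _ _ Hn _; apply: Hn. Qed.

Lemma ldecw_pair_in i : i.+1 < m -> inIw rels (slice w (cut i) (cut i.+2)).
Proof.
move=> hi; rewrite (@slice_cat _ w _ (cut i.+1)); last by rewrite !cutpos_mono.
rewrite -!nth_ldecw //; last exact: ltnW.
by case: Hus => _ _ _ _ Hp; case: (Hp i hi).
Qed.

Lemma ldecw_pair_min i y :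
  i.+1 < m -> cut i <= y -> y < cut i.+2 -> ~ inIw rels (slice w (cut i) y).
Proof.
move=> hi h1 h2.
have Hle : cut i.+2 <= size w.
  by rewrite !size_cat; apply: leq_trans (cutpos_le _ _ _) _; case: Hus => _ <- _ _ _; lia.
case: Hus => _ _ _ _ Hp; case: (Hp i hi) => _ Hmin.
apply: (Hmin _ (slice w y (cut i.+2))).
  rewrite nth_ldecw ?(ltnW hi) // nth_ldecw // -!slice_cat //; first by rewrite h1 ltnW.
  by rewrite !cutpos_mono.
move=> E0; have := f_equal size E0; rewrite size_slice //=; lia.
Qed.

End LeftCuts.
End Decompositions.

Section RightCuts.
Variables (E : finType) (rels : seq E -> Prop).
Variables (m : nat) (ws : seq E) (us : seq (seq E)).
Hypothesis Hus : ldecw rels m ws us.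
Hypothesis Hm : 0 < m.

Local Notation N := (size ws).
Local Notation cut := (cutpos [::] us).
Local Notation inIs x y := (inIw rels (slice ws x y)).

Let piece_notin i : i < m -> ~ inIs (cut i) (cut i.+1).
Proof.
by move=> hi; have := ldecw_piece_notin (pre := [::]) (post := [::]) Hus hi; rewrite /= cats0.
Qed.

Let pair_in i : i.+1 < m -> inIs (cut i) (cut i.+2).
Proof. by move=> hi; have := ldecw_pair_in [::] [::] Hus hi; rewrite /= cats0. Qed.

Let pair_min i y : i.+1 < m -> cut i <= y -> y < cut i.+2 -> ~ inIs (cut i) y.
Proof.
move=> hi h1 h2.
by have := ldecw_pair_min (pre := [::]) (post := [::]) Hus hi h1 h2; rewrite /= cats0.
Qed.

Let cut_m : cut m = N.
Proof. exact: (cutpos_size [::] Hus). Qed.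

(* Cuts of the right decomposition, built greedily from the end: [rcut k.+2] is the
   latest start of a word of I ending at [rcut k]. *)
Fixpoint rcut k := match k with
  | 0 => N
  | 1 => N.-1
  | k'.+2 => last_below (fun y => classicb (inIs y (rcut k'))) (rcut k')
  end.

Definition rcut_between k := cut (m - k) <= rcut k /\ (0 < k -> rcut k < cut (m - k).+1).

Lemma rcut_step k : k.+2 <= m -> rcut_between k ->
  [/\ rcut_between k.+2, inIs (rcut k.+2) (rcut k), rcut k.+2 <= rcut k &
      forall y, rcut k.+2 < y <= rcut k -> ~ inIs y (rcut k)].
Proof.
move=> hk [l u].
have [i ei] : exists i, m = i.+2 + k by exists (m - k.+2); lia.
rewrite /rcut_between (_ : m - k.+2 = i); last by lia.
rewrite (_ : m - k = i.+2) in l u; last by lia.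
have hik : cut i <= rcut k by apply: leq_trans l; apply: cutpos_mono; lia.
have pk : inIs (cut i) (rcut k).
  by apply: (inIw_slice_widen (leqnn _) (cutpos_mono _ _ (leqW (leqnSn i))) l (pair_in _)); lia.
have [d1 d2 d3 d4] :=
  @last_belowP (fun y => classicb (inIs y (rcut k))) _ _ hik (introT (classicbP _) pk).
rewrite -/(rcut k.+2) in d1 d2 d3 d4.
split => //; last 2 first.
- exact/classicbP.
- by move=> y hy /classicbP; apply/negP; apply: d4.
split => // _; rewrite ltnNge; apply/negP => c.
have P1 : inIs (cut i.+1) (rcut k).
  by apply: (inIw_slice_widen c d3 (leqnn _)); exact/classicbP.
case: (posnP k) => [k0|k_gt0].
  apply: (piece_notin (i := i.+1)); first by lia.
  by move: P1; rewrite k0 (_ : i.+2 = m) ?cut_m // ei k0 addn0.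
by apply: (pair_min (i := i.+1) _ (leq_trans c d3) (u k_gt0) P1); lia.
Qed.

Lemma rcut_betweenP k : k <= m -> rcut_between k.
Proof.
suff : (k <= m -> rcut_between k) /\ (k.+1 <= m -> rcut_between k.+1) by case.
elim: k => [|k [IH1 IH2]].
  split=> [_|h1]; first by split; [rewrite subn0 cut_m|].
  have h : cut m.-1 < N.
    by rewrite -cut_m -{2}(prednK Hm); apply: (cutpos_lt [::] Hus); rewrite prednK.
  rewrite /rcut_between subn1 prednK // cut_m /=; split => //; lia.
by split => // h; have [] := rcut_step h (IH1 (ltnW (ltnW h))).
Qed.

Lemma rcut_decr j : j < m -> rcut j.+1 < rcut j.
Proof.
move=> hj; have [_ u] := rcut_betweenP hj; have [l _] := rcut_betweenP (ltnW hj).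
have := u isT; rewrite (_ : (m - j.+1).+1 = m - j); last by lia.
by move=> h; apply: leq_trans h l.
Qed.

Lemma rcut_le j : j <= m -> rcut j <= N.
Proof.
elim: j => [|j IH] hj //; apply: ltnW; apply: leq_trans (rcut_decr hj) _.
by apply: IH; apply: ltnW.
Qed.

Lemma rcut_m : rcut m = 0.
Proof.
have [_ u] := rcut_betweenP (leqnn m).
by have := u Hm; rewrite subnn (cutpos1 [::] Hus Hm) /=; lia.
Qed.

Definition rpieces k := mkseq (fun j => slice ws (rcut j.+1) (rcut j)) k.

Lemma flatten_rev_rpieces k : k <= m -> flatten (rev (rpieces k)) = slice ws (rcut k) N.
Proof.
elim: k => [|k IH] hk; first by rewrite /slice subnn take0.
rewrite /rpieces mkseqS rev_rcons /= IH; last exact: ltnW.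
rewrite -slice_cat //; apply/andP; split; first by apply: ltnW; apply: rcut_decr.
by apply: rcut_le; apply: ltnW.
Qed.

Lemma rdecw_rpieces : rdecw rels m ws (rpieces m).
Proof.
split.
- by rewrite size_mkseq.
- by rewrite flatten_rev_rpieces // rcut_m slice_full.
- move=> _; rewrite nth_mkseq // size_slice //=.
  have := cutpos_lt [::] Hus (i := m.-1); rewrite prednK // cut_m; lia.
- move=> i hi; rewrite nth_mkseq //.
  case: i hi => [|j] hj.
    move=> /= HP; apply: (piece_notin (i := m.-1)); first by lia.
    rewrite prednK // cut_m; apply: (inIw_slice_widen _ (leq_pred _) (leqnn _) HP).
    by have [l _] := @rcut_betweenP 1 Hm; rewrite subn1 in l.
  move=> HP.
  have [l2 _] := rcut_betweenP hj; have [_ u1] := rcut_betweenP (ltnW hj).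
  have := u1 isT; rewrite (_ : (m - j.+1).+1 = (m - j.+2).+2); last by lia.
  move=> u; apply: (pair_min (i := m - j.+2) (y := rcut j.+1)) => //; first by lia.
    exact: leq_trans l2 (ltnW (rcut_decr _)).
  exact: (inIw_slice_widen l2 (ltnW (rcut_decr _)) (leqnn _) HP).
- move=> i hi; rewrite !nth_mkseq //; last exact: ltnW.
  have [_ Pst Hle Hmax] := rcut_step hi (rcut_betweenP (ltnW (ltnW hi))).
  have Hc : rcut i.+2 <= rcut i.+1 <= rcut i.
    by apply/andP; split; apply: ltnW; apply: rcut_decr; lia.
  rewrite -slice_cat //; split => // x y Hxy Hx HP.
  have Hy := slice_suffix Hle Hxy.
  have Hs : size x + size y = rcut i - rcut i.+2.
    by rewrite -size_cat -Hxy size_slice // rcut_le // ltnW // ltnW.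
  apply: (Hmax (rcut i.+2 + size x)); last by rewrite -Hy.
  apply/andP; split; last by lia.
  by case: x Hx {Hxy Hy Hs} => // a x _; rewrite /= addnS ltnS leq_addr.
Qed.

End RightCuts.

Lemma ldecw_rdecw (E : finType) (rels : seq E -> Prop) m ws us :
  ldecw rels m ws us -> exists vs, rdecw rels m ws vs.
Proof.
case: m => [|m] H; last by eexists; apply: (rdecw_rpieces H).
exists [::]; case: H => /size0nil -> -> _ _ _.
by split => // i; rewrite ltn0.
Qed.

Lemma nth_map_rev (E : Type) (vs : seq (seq E)) i :
  nth [::] (map rev vs) i = rev (nth [::] vs i).
Proof.
case: (ltnP i (size vs)) => h; first by rewrite (nth_map [::]).
by rewrite !nth_default ?size_map.
Qed.

(* [rels'] is any predicate equivalent to [rels \o rev], so that mirroring twice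
   returns to [rels] itself. *)
Section Mirror.
Variables (E : finType) (rels rels' : seq E -> Prop).
Hypothesis Hrev : forall r, rels' r <-> rels (rev r).

Lemma inIw_rev w : inIw rels' w <-> inIw rels (rev w).
Proof.
split.
- case=> l [r [m' [h ->]]]; exists (rev m'), (rev r), (rev l); split; first exact/Hrev.
  by rewrite !rev_cat catA.
- case=> l [r [m' [h Hw]]]; exists (rev m'), (rev r), (rev l); split.
    by apply/Hrev; rewrite revK.
  by rewrite -(revK w) Hw !rev_cat catA.
Qed.

Lemma rdecw_rev m ws vs : rdecw rels m ws vs -> ldecw rels' m (rev ws) (map rev vs).
Proof.
case=> Hs Hw H0 Hn Hp; split.
- by rewrite size_map.
- by rewrite Hw rev_flatten map_rev revK.
- by move=> h; rewrite nth_map_rev size_rev; exact: H0.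
- by move=> i hi; rewrite nth_map_rev => /inIw_rev; rewrite revK; exact: Hn.
- move=> i hi; have [h1 h2] := Hp i hi; rewrite !nth_map_rev; split.
    by apply/inIw_rev; rewrite rev_cat !revK.
  move=> x y Hxy Hy /inIw_rev Hx; apply: (h2 (rev y) (rev x)) => //.
    by rewrite -rev_cat -Hxy rev_cat !revK.
  by move=> e; apply: Hy; rewrite -(revK y) e.
Qed.

Lemma ldecw_rev m ws us : ldecw rels m ws us -> rdecw rels' m (rev ws) (map rev us).
Proof.
case=> Hs Hw H0 Hn Hp; split.
- by rewrite size_map.
- by rewrite Hw rev_flatten.
- by move=> h; rewrite nth_map_rev size_rev; exact: H0.
- by move=> i hi; rewrite nth_map_rev => /inIw_rev; rewrite revK; exact: Hn.
- move=> i hi; have [h1 h2] := Hp i hi; rewrite !nth_map_rev; split.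
    by apply/inIw_rev; rewrite rev_cat !revK.
  move=> x y Hxy Hx /inIw_rev Hy; apply: (h2 (rev y) (rev x)) => //.
    by rewrite -rev_cat -Hxy rev_cat !revK.
  by move=> e; apply: Hx; rewrite -(revK x) e.
Qed.

End Mirror.

Definition rev_rels (E : finType) (rels : seq E -> Prop) r := rels (rev r).

Lemma rev_relsE (E : finType) (rels : seq E -> Prop) r : rev_rels rels r <-> rels (rev r).
Proof. by []. Qed.

Lemma rev_relsK (E : finType) (rels : seq E -> Prop) r : rels r <-> rev_rels rels (rev r).
Proof. by rewrite /rev_rels revK. Qed.

Lemma rdecw_ldecw (E : finType) (rels : seq E -> Prop) m ws vs :
  rdecw rels m ws vs -> exists us, ldecw rels m ws us.
Proof.
move=> /(rdecw_rev (rev_relsE rels)) /ldecw_rdecw [vs' /(rdecw_rev (rev_relsK rels))].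
by rewrite revK; exists (map rev vs').
Qed.

Section Extension.
Variables (E : finType) (rels : seq E -> Prop).

(* The next piece of a left decomposition of [q] inside [q ++ a] is found greedily,
   as soon as the last piece together with all of [a] lies in I. *)
Lemma ldecw_rcons m (q a : seq E) us : ldecw rels m.+1 q us ->
  inIw rels (slice (q ++ a) (cutpos [::] us m) (size (q ++ a))) -> ~ inIw rels a ->
  exists u c, a = u ++ c /\ ldecw rels m.+2 (q ++ u) (rcons us u).
Proof.
move=> Hus Hin HaI.
set w := q ++ a in Hin *; set e := cutpos [::] us m in Hin *.
have cut_q : cutpos [::] us m.+1 = size q by rewrite (cutpos_size [::] Hus).
pose P z := (size q <= z) && classicb (inIw rels (slice w e z)).
have Pw : P (size w) by rewrite /P /w size_cat leq_addr -size_cat; exact/classicbP.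
case: (ex_minnP (ex_intro P _ Pw)) => z /andP [hqz /classicbP Hz] zmin.
have hzw : z <= size w by apply: zmin.
set u := slice w (size q) z.
have Hau : a = u ++ drop (z - size q) a by rewrite /u /slice drop_size_cat // cat_take_drop.
have uI : ~ inIw rels u.
  by move=> /(inIw_infix [::] (drop (z - size q) a)); rewrite /= -Hau.
exists u, (drop (z - size q) a); split => //.
case: (Hus) => Hs Hw H0 Hn Hp; split.
- by rewrite size_rcons Hs.
- by rewrite flatten_rcons Hw.
- by move=> _; rewrite nth_rcons Hs /= H0.
- move=> i; rewrite ltnS nth_rcons Hs leq_eqVlt => /orP [/eqP ->|hi].
    by rewrite ltnn eqxx.
  by rewrite hi; apply: Hn.
- move=> i; rewrite ltnS => hi; rewrite !nth_rcons Hs hi.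
  case: (ltnP i.+1 m.+1) => h; first exact: Hp.
  have -> : i = m by lia.
  rewrite eqxx (nth_ldecw [::] a Hus (ltnSn m)) /= -/w -/e cut_q -slice_cat; last first.
    by rewrite hqz -cut_q cutpos_mono.
  split => // x y Hxy Hy Hx.
  have Hsx := slice_prefix Hxy.
  have Hsxy : size x + size y = z - e by rewrite -size_cat -Hxy size_slice.
  have Hy0 : 0 < size y by case: y Hy {Hxy Hsxy}.
  case: (leqP (size q) (e + size x)) => hc.
    have : z <= e + size x by apply: zmin; rewrite /P hc; apply/classicbP; rewrite -Hsx.
    lia.
  apply: (ldecw_piece_notin (pre := [::]) (post := a) Hus (ltnSn m)).
  rewrite /= -/w -/e cut_q.
  by apply: (inIw_slice_widen (leqnn _) (leq_addr _ _) (ltnW hc)); rewrite -Hsx.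
Qed.

(* Inductively: were cut [2k+3] of [q1] right of cut [2k+2] of [q2], the two pieces of
   [q1] from its cut [2k+1] would have a proper prefix containing the two pieces of [q2]
   between its cuts [2k] and [2k+2], a word of I. *)
Lemma ldecw_interleave m (q1 q2 a b : seq E) us1 us2 :
  ldecw rels m q1 us1 -> ldecw rels m q2 us2 -> q1 ++ a = b ++ q2 -> 0 < size b ->
  forall k, (2 * k).+1 < m -> cutpos [::] us1 (2 * k).+1 <= cutpos b us2 (2 * k).
Proof.
move=> H1 H2 Hw Hb; elim=> [|k IH] hk.
  by rewrite (cutpos1 [::] H1) ?cutpos0 //; lia.
have IH' : cutpos [::] us1 (2 * k).+1 <= cutpos b us2 (2 * k) by apply: IH; lia.
rewrite (_ : 2 * k.+1 = (2 * k).+2) in hk *; last by lia.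
rewrite leqNgt; apply/negP => c.
have pair2 := ldecw_pair_in b [::] H2 (i := 2 * k) (ltn_trans (ltnSn _) (ltnW hk)).
rewrite cats0 -Hw -[q1 ++ a]/([::] ++ q1 ++ a) in pair2.
apply: (ldecw_pair_min (pre := [::]) (post := a) H1 (i := (2 * k).+1)
                      (y := cutpos b us2 (2 * k).+2)) => //.
- exact: ltnW hk.
- exact: leq_trans IH' (cutpos_mono _ _ (leqW (leqnSn _))).
- exact: inIw_slice_widen IH' (cutpos_mono _ _ (leqW (leqnSn _))) (leqnn _) pair2.
Qed.

Lemma ldecw_extend m (q1 q2 a b : seq E) us1 us2 : ~~ odd m ->
  ldecw rels m q1 us1 -> ldecw rels m q2 us2 -> q1 ++ a = b ++ q2 ->
  0 < size a -> 0 < size b -> ~ inIw rels a ->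
  exists u c, a = u ++ c /\ ldecw rels m.+1 (q1 ++ u) (rcons us1 u).
Proof.
move=> Hev H1 H2 Hw Ha Hb HaI.
case: m Hev H1 H2 => [|m] Hev H1 H2.
  case: H1 => /size0nil -> -> _ _ _.
  case: a Ha Hw HaI => // x a' _ Hw HaI.
  exists [:: x], a'; split => //; split => //.
  by move=> i; rewrite ltnS leqn0 => /eqP -> /= /(inIw_infix [::] a').
apply: (ldecw_rcons H1 _ HaI).
have [k ek] : exists k, m = (2 * k).+1.
  exists m./2; move: Hev; rewrite /= negbK => Hm.
  by rewrite -[m in LHS]odd_double_half Hm -mul2n.
have hk : (2 * k).+1 < m.+1 by rewrite ek.
have pair2 := ldecw_pair_in b [::] H2 hk.
rewrite cats0 -Hw -[q1 ++ a]/([::] ++ q1 ++ a) in pair2.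
have -> : size (q1 ++ a) = cutpos b us2 (2 * k).+2.
  by rewrite -ek (cutpos_size b H2) Hw size_cat.
rewrite ek.
exact: inIw_slice_widen (ldecw_interleave H1 H2 Hw Hb hk)
         (cutpos_mono _ _ (leqW (leqnSn _))) (leqnn _) pair2.
Qed.

End Extension.

Lemma rdecw_extend (E : finType) (rels : seq E -> Prop) m (q1 q2 a b : seq E) vs1 vs2 :
  ~~ odd m -> rdecw rels m q1 vs1 -> rdecw rels m q2 vs2 -> q1 ++ a = b ++ q2 ->
  0 < size a -> 0 < size b -> ~ inIw rels b ->
  exists u c, b = c ++ u /\ rdecw rels m.+1 (u ++ q2) (rcons vs2 u).
Proof.
move=> Hev /(rdecw_rev (rev_relsE rels)) H1 /(rdecw_rev (rev_relsE rels)) H2 Hw Ha Hb HbI.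
have Hw' : rev q2 ++ rev b = rev a ++ rev q1 by rewrite -!rev_cat Hw.
have HbI' : ~ inIw (rev_rels rels) (rev b) by move/(inIw_rev (rev_relsE rels)); rewrite revK.
have [|//|u [c [Hbu Hu]]] := ldecw_extend Hev H2 H1 Hw' _ _ HbI'; rewrite ?size_rev //.
exists (rev u), (rev c); split; first by rewrite -rev_cat -Hbu revK.
by have := ldecw_rev (rev_relsK rels) Hu; rewrite rev_cat revK map_rcons (mapK revK).
Qed.

Section Paths.
Variables (V E : finType) (s t : E -> V) (rels : seq E -> Prop).

Local Notation valid := (valid s t).

Lemma chain_cat h r h2 r2 : chain s t (h :: r ++ h2 :: r2) <->
  chain s t (h :: r) /\ s (last h r) = t h2 /\ chain s t (h2 :: r2).
Proof.
elim: r h => [|h' r IH] h /=.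
  by split; [case=> a b | case=> _ [a b]].
split.
  by case=> e /IH [c1 [c2 c3]]; do !split.
by case=> [[e c1] [c2 c3]]; split => //; apply/IH; do !split.
Qed.

Lemma valid_cat x y w1 w2 : valid (QPath x y (w1 ++ w2)) <->
  exists z, valid (QPath z y w1) /\ valid (QPath x z w2).
Proof.
case: w1 => [|h r] /=.
  by split; [move=> Hv; exists y | case=> z []; rewrite /valid /= => -> Hv].
case: w2 => [|h2 r2].
  rewrite cats0 /=; split; first by move=> Hv; exists x.
  by case=> z []; rewrite /valid /= => Hv ->.
rewrite /valid /=; split.
  case=> e1 [e2 /chain_cat [c1 [c2 c3]]]; exists (t h2); split => //.
  by split => //; split => //; rewrite e2 last_cat.
case=> z [[e1 [e2 c1]] [e3 [e4 c4]]]; split => //; split.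
  by rewrite last_cat /= e4.
by apply/chain_cat; do !split => //; rewrite -e2.
Qed.

Lemma valid_pcat q p : valid q -> valid p -> psrc q = ptgt p -> valid (pcat q p).
Proof.
case: q p => [xq yq wq] [xp yp wp] Vq Vp /= e.
by apply/valid_cat; exists xq; split; last rewrite e.
Qed.

Lemma ldec_ldecw m p us : ldec s t rels m p us <-> valid p /\ ldecw rels m (parrs p) us.
Proof. by split; [case=> [[Hv Hs] Hw H0 Hn Hp] | case=> Hv [Hs Hw H0 Hn Hp]]. Qed.

Lemma rdec_rdecw m p vs : rdec s t rels m p vs <-> valid p /\ rdecw rels m (parrs p) vs.
Proof. by split; [case=> [[Hv Hs] Hw H0 Hn Hp] | case=> Hv [Hs Hw H0 Hn Hp]]. Qed.

Lemma rdec_ldec m p vs : rdec s t rels m p vs -> exists us, ldec s t rels m p us.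
Proof.
by case/rdec_rdecw => Vp /rdecw_ldecw [us Hus]; exists us; apply/ldec_ldecw.
Qed.

Lemma ldec_extend m (q1 q2 a b : qpath V E) us1 us2 : ~~ odd m ->
  ldec s t rels m q1 us1 -> ldec s t rels m q2 us2 ->
  valid a -> psrc q1 = ptgt a -> parrs q1 ++ parrs a = parrs b ++ parrs q2 ->
  0 < size (parrs a) -> 0 < size (parrs b) -> ~ inI rels a ->
  exists p us, [/\ ldec s t rels m.+1 p us, parrs q1 = flatten (take m us),
                   ptgt q1 = ptgt p & exists c, composable s t p c /\ pcat q1 a = pcat p c].
Proof.
move=> Hev /ldec_ldecw [Vq1 L1] /ldec_ldecw [_ L2] Va Hq1a Hw Ha Hb HaI.
have [u [c [Hac Lu]]] := ldecw_extend Hev L1 L2 Hw Ha Hb HaI.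
have /valid_cat [z [Vp Vc]] : valid (QPath (psrc a) (ptgt q1) ((parrs q1 ++ u) ++ c)).
  by rewrite -catA -Hac; apply: valid_pcat.
exists (QPath z (ptgt q1) (parrs q1 ++ u)), (rcons us1 u); split => //.
- exact/ldec_ldecw.
- by case: L1 => Hs Hq1 _ _ _; rewrite -cats1 take_size_cat.
- exists (QPath (psrc a) z c); split; first by [].
  by rewrite /pcat /= Hac catA.
Qed.

Lemma rdec_extend m (q1 q2 a b : qpath V E) us1 us2 : ~~ odd m ->
  ldec s t rels m q1 us1 -> ldec s t rels m q2 us2 ->
  valid b -> psrc b = ptgt q2 -> parrs q1 ++ parrs a = parrs b ++ parrs q2 ->
  0 < size (parrs a) -> 0 < size (parrs b) -> ~ inI rels b ->
  exists p vs, [/\ rdec s t rels m.+1 p vs, parrs q2 = flatten (rev (take m vs)),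
                   psrc q2 = psrc p & exists c, composable s t c p /\ pcat b q2 = pcat c p].
Proof.
move=> Hev /ldec_ldecw [_ /ldecw_rdecw [vs1 R1]] /ldec_ldecw [Vq2 /ldecw_rdecw [vs2 R2]].
move=> Vb Hbq2 Hw Ha Hb HbI.
have [u [c [Hbc Ru]]] := rdecw_extend Hev R1 R2 Hw Ha Hb HbI.
have /valid_cat [z [Vc Vp]] : valid (QPath (psrc q2) (ptgt b) (c ++ (u ++ parrs q2))).
  by rewrite catA -Hbc; apply: valid_pcat.
exists (QPath (psrc q2) z (u ++ parrs q2)), (rcons vs2 u); split => //.
- exact/rdec_rdecw.
- by case: R2 => Hs Hq2 _ _ _; rewrite -cats1 take_size_cat.
- exists (QPath z (ptgt b) c); split; first by [].
  by rewrite /pcat /= Hbc catA.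
Qed.

End Paths.

Lemma abszS_odd (n : int) : (-1 <= n)%R -> odd `|n| ->
  ~~ odd `|(n + 1)%R| /\ `|(n + 1 + 1)%R| = `|(n + 1)%R|.+1.
Proof.
case: n => k Hn Hk; first by rewrite -!PoszD !addn1 /= Hk.
by have -> : k = 0 by move: Hn; rewrite NegzE; lia.
Qed.

Theorem mainTheorem3
  (V E : finType) (s t : E -> V) (rels : seq E -> Prop)
  (* I is generated by paths of length >= 2 *)
  (Hrels : forall r, rels r -> (2 <= size r)%N /\ chain s t r)
  (* A = kQ/I is finite dimensional: long enough paths lie in I *)
  (Hfin : exists N : nat, forall p : qpath V E,
            valid s t p -> (N <= size (parrs p))%N -> inI rels p)
  (n : int) (Hn : (-1 <= n)%R) (Hodd : odd `|n|%N)
  (q1 q2 a b : qpath V E)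
  (Hq1 : Gamma s t rels n q1) (Hq2 : Gamma s t rels n q2)
  (Ha : valid s t a) (Hb : valid s t b)
  (Ha0 : (0 < size (parrs a))%N) (Hb0 : (0 < size (parrs b))%N)
  (Hq1a : psrc q1 = ptgt a) (Hbq2 : psrc b = ptgt q2)
  (Hw : pcat q1 a = pcat b q2)
  (HaI : ~ inI rels a) (HbI : ~ inI rels b) :
  exists p1 p2 : qpath V E,
    (* p1 in Gamma_{n+1}, occurring in w = q1 a as a suffix (w = p1 c), so that the
       occurrence of sigma_n(p1) in w is the occurrence q1; and sigma_n(p1) = q1 *)
    (Gamma s t rels (n + 1)%R p1 /\
     (exists c, composable s t p1 c /\ pcat q1 a = pcat p1 c) /\
     sigma_is s t rels (n + 1)%R n p1 q1) /\
    (* p2 in Gamma_{n+1}, occurring in w as a prefix (w = c p2); pi_n(p2) = q2 *)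
    (Gamma s t rels (n + 1)%R p2 /\
     (exists c, composable s t c p2 /\ pcat q1 a = pcat c p2) /\
     pi_is s t rels (n + 1)%R n p2 q2).
Proof.
have [Hev Em] := abszS_odd Hn Hodd.
have Hn1 : (-1 <= n + 1)%R by lia.
have Hnn : (n <= n + 1)%R by lia.
case: Hq1 Hq2 => [_ [us1 L1]] [_ [us2 L2]].
have Hww := congr1 (@parrs V E) Hw.
have [p1 [us [Lp1 Eq1 Et1 Hc1]]] := ldec_extend Hev L1 L2 Ha Hq1a Hww Ha0 Hb0 HaI.
have [p2 [vs [Rp2 Eq2 Es2 Hc2]]] := rdec_extend Hev L1 L2 Hb Hbq2 Hww Ha0 Hb0 HbI.
have [us' Lp2] := rdec_ldec Rp2.
have Vq1 : valid s t q1 by case/ldec_ldecw: L1.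
have Vq2 : valid s t q2 by case/ldec_ldecw: L2.
rewrite -Em in Lp1 Rp2 Lp2; rewrite -Hw in Hc2.
by exists p1, p2; do !split => //; [exists us | exists us | exists us' | exists vs].
Qed.
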